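(* There is a function $g$ with $g(n)/n^2\to 0$ as $n\to\infty$ such that for every odd $n\ge 7$, the diameter of the pair digraph of the automaton $\mathcal{F}_n$ is at least $\frac{n^2}{4}+g(n)$.
   Context: For a DFA with permutation letters on state set $Q$, the pair digraph has as vertices the unordered pairs $\{p,q\}$ of distinct states and an edge from $\{p,q\}$ to $\{p\cdot c,q\cdot c\}$ for each letter $c$; its diameter is the maximum over ordered pairs of vertices of the length of a shortest directed path between them. For odd $n\ge7$, the automaton $\mathcal{F}_n$ has states $q_1,\dots,q_n$ and two letters $a,b$, both permutations, defined as follows (every state not mentioned for a letter is fixed by it): $a$ acts as the 4-cycle $q_1\to q_2\to q_3\to q_4\to q_1$; $b$ swaps $q_1$ and $q_6$; for each $1\le i\le\frac{n-3}{2}$, the states $q_{2i+1}$ and $q_{2i+3}$ are swapped by $b$ if $i$ is odd and by $a$ if $i$ is even; for each $3\le j\le\frac{n-3}{2}$, the states $q_{2j}$ and $q_{2j+2}$ are swapped by $a$ if $j$ is odd and by $b$ if $j$ is even. (Thus $a$: $q_1\to q_2\to q_3\to q_4\to q_1$, $q_5\leftrightarrow q_7$, $q_6\leftrightarrow q_8$, \dots; $b$: $q_1\leftrightarrow q_6$, $q_3\leftrightarrow q_5$, $q_7\leftrightarrow q_9$, $q_8\leftrightarrow q_{10}$, \dots, fixing $q_2,q_4$.) *)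

From Stdlib Require Import Reals Arith List Bool.
Import ListNotations.

(* States of F_n are q_1, ..., q_n, represented by the naturals 1..n.
   Letters: [true] = a, [false] = b. *)

(* i ranges over 1 <= i <= (n-3)/2 ;  j ranges over 3 <= j <= (n-3)/2 *)
Definition i_range (n : nat) : list nat := List.seq 1 ((n - 3) / 2).
Definition j_range (n : nat) : list nat := List.seq 3 ((n - 3) / 2 - 2).

Definition chain_swap (n : nat) (seli selj : nat -> bool) (q : nat) : nat :=
  if existsb (fun i => andb (seli i) (Nat.eqb q (2 * i + 1))) (i_range n) then q + 2
  else if existsb (fun i => andb (seli i) (Nat.eqb q (2 * i + 3))) (i_range n) then q - 2
  else if existsb (fun j => andb (selj j) (Nat.eqb q (2 * j))) (j_range n) then q + 2
  else if existsb (fun j => andb (selj j) (Nat.eqb q (2 * j + 2))) (j_range n) then q - 2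
  else q.

Definition a_act (n q : nat) : nat :=
  if Nat.eqb q 1 then 2
  else if Nat.eqb q 2 then 3
  else if Nat.eqb q 3 then 4
  else if Nat.eqb q 4 then 1
  else chain_swap n Nat.even Nat.odd q.

Definition b_act (n q : nat) : nat :=
  if Nat.eqb q 1 then 6
  else if Nat.eqb q 6 then 1
  else chain_swap n Nat.odd Nat.even q.

Definition letter_act (n : nat) (c : bool) (q : nat) : nat :=
  if c then a_act n q else b_act n q.

Definition word_act (n : nat) (w : list bool) (q : nat) : nat :=
  fold_left (fun x c => letter_act n c x) w q.

(* Vertices of the pair digraph of F_n: unordered pairs {p,q} of distinct states,
   represented by (p,q) with 1 <= p < q <= n. *)
Definition pair_vertex (n : nat) (v : nat * nat) : Prop :=
  1 <= fst v /\ fst v < snd v /\ snd v <= n.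

(* A walk of length k in the pair digraph from {p,q} is determined by a word w of
   length k (one edge per letter); it ends at {w(p), w(q)}. *)
Definition walk_ends_at (n : nat) (w : list bool) (u v : nat * nat) : Prop :=
  (word_act n w (fst u) = fst v /\ word_act n w (snd u) = snd v) \/
  (word_act n w (fst u) = snd v /\ word_act n w (snd u) = fst v).

(* "the diameter of the pair digraph of F_n is at least x":
   some ordered pair of vertices (u,v) has every directed path from u to v of
   length >= x (i.e. the shortest-path distance d(u,v), possibly infinite, is >= x). *)
Definition pair_diam_ge (n : nat) (x : R) : Prop :=
  exists u v, pair_vertex n u /\ pair_vertex n v /\
    forall w : list bool, walk_ends_at n w u v -> (x <= INR (length w))%R.

(* Lay the states out on a path
     q_n, ..., q_7, q_5, q_3, q_1, q_6, q_8, ..., q_{n-1}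
   with coordinates -M, ..., M, where M = (n-3)/2; q_2 and q_4 lie off the path.
   Away from the 4-cycle q_1 -> q_2 -> q_3 -> q_4 -> q_1, the letters a and b act
   on the path as its two alternating matchings, i.e. as reflections, so they
   preserve an invariant [pair_offset] of pairs of positions with values in
   0..M; only a passage through the 4-cycle can change it.  The potential
   M * pair_offset + pair_lag, capped at M^2 and extended to pairs meeting q_2 or
   q_4, drops by at most one per letter.  It is M^2 on {q_3, q_{n-1}} and 2 on
   {q_2, q_4}, so a word mapping the first pair to the second has length at
   least M^2 - 2 = n^2/4 - O(n). *)

From Stdlib Require Import Reals Arith List.
From Stdlib Require Import ZArith Lia Bool Lra.

Local Open Scope R_scope.

Lemma Un_cv_affine_over_square (a b : R) : Un_cv (fun n => (a * INR n + b) / INR n ^ 2) 0.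
Proof.
  intros eps Heps.
  destruct (INR_archimed eps (Rabs a + Rabs b) Heps) as [N HN].
  exists (Nat.max N 1). intros n Hn.
  assert (Hx1 : 1 <= INR n) by (apply (le_INR 1); lia).
  assert (HxN : INR N <= INR n) by (apply le_INR; lia).
  set (x := INR n) in *.
  assert (Hx2 : 0 < x ^ 2) by nra.
  unfold R_dist, Rdiv. rewrite Rminus_0_r, Rabs_mult, Rabs_inv, (Rabs_pos_eq (x ^ 2)) by lra.
  apply (Rmult_lt_reg_r (x ^ 2)); [exact Hx2|].
  rewrite Rmult_assoc, Rinv_l, Rmult_1_r by lra.
  assert (Rabs (a * x + b) <= (Rabs a + Rabs b) * x).
  { eapply Rle_trans; [apply Rabs_triang|]. rewrite Rabs_mult, (Rabs_pos_eq x) by lra.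
    pose proof (Rabs_pos b). nra. }
  assert (Rabs a + Rabs b < eps * x) by nra.
  assert ((Rabs a + Rabs b) * x < eps * x * x) by (apply Rmult_lt_compat_r; lra).
  simpl. lra.
Qed.

Local Close Scope R_scope.

Section WordPotential.
Context {T L : Type}.
Variables (act : L -> T -> T) (valid : T -> Prop) (pot : T -> T -> Z).
Hypothesis act_valid : forall c t, valid t -> valid (act c t).
Hypothesis act_injective : forall c t1 t2, valid t1 -> valid t2 -> act c t1 = act c t2 -> t1 = t2.
Hypothesis pot_step : forall c t1 t2, valid t1 -> valid t2 -> t1 <> t2 ->
  (pot t1 t2 <= pot (act c t1) (act c t2) + 1)%Z.

Definition act_word (w : list L) (t : T) : T := fold_left (fun x c => act c x) w t.

Lemma potential_word_bound w t1 t2 : valid t1 -> valid t2 -> t1 <> t2 ->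
  (pot t1 t2 <= pot (act_word w t1) (act_word w t2) + Z.of_nat (length w))%Z.
Proof.
  revert t1 t2. induction w as [|c w IH]; intros t1 t2 V1 V2 D; cbn; [lia|].
  assert (Dc : act c t1 <> act c t2) by (intros E; apply D; exact (act_injective c t1 t2 V1 V2 E)).
  specialize (IH (act c t1) (act c t2) (act_valid c t1 V1) (act_valid c t2 V2) Dc).
  pose proof (pot_step c t1 t2 V1 V2 D). unfold act_word in IH. lia.
Qed.

End WordPotential.

Lemma fold_left_semiconj {A B C : Type} (f : A -> C -> A) (g : B -> C -> B) (h : A -> B)
    (P : A -> Prop) :
  (forall a c, P a -> P (f a c) /\ h (f a c) = g (h a) c) ->
  forall w a, P a -> P (fold_left f w a) /\ h (fold_left f w a) = fold_left g w (h a).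
Proof.
  intros Hstep w. induction w as [|c w IH]; intros a Ha; cbn; [auto|].
  destruct (Hstep a c Ha) as [Hf Hh]. rewrite <- Hh. exact (IH _ Hf).
Qed.

Lemma existsb_seq_at (f : nat -> bool) a k i0 : (forall i, f i = true -> i = i0) ->
  existsb f (seq a k) = ((a <=? i0) && (i0 <? a + k) && f i0)%bool.
Proof.
  intros Hf. apply Bool.eq_iff_eq_true. rewrite existsb_exists, !andb_true_iff.
  rewrite Nat.leb_le, Nat.ltb_lt. split.
  - intros [i [Hin Hi]]. apply in_seq in Hin. rewrite <- (Hf i Hi). split; [lia | exact Hi].
  - intros [[? ?] ?]. exists i0. rewrite in_seq. split; [lia | assumption].
Qed.

Local Open Scope Z_scope.

Ltac unbool :=
  repeat match goal with
  | H : (_ =? _)%Z = true |- _ => apply Z.eqb_eq in H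
  | H : (_ =? _)%Z = false |- _ => apply Z.eqb_neq in H
  | H : (_ <=? _)%Z = true |- _ => apply Z.leb_le in H
  | H : (_ <=? _)%Z = false |- _ => apply Z.leb_gt in H
  end.

Lemma Z_even_true_double y : Z.even y = true -> exists k, y = 2 * k.
Proof. now intros [k Hk]%Z.even_spec; exists k. Qed.

Lemma Z_even_false_double y : Z.even y = false -> exists k, y = 2 * k + 1.
Proof.
  intros H. assert (Hodd : Z.odd y = true) by now rewrite <- Z.negb_even, H.
  now apply Z.odd_spec in Hodd as [k Hk]; exists k.
Qed.

Ltac split_parity :=
  repeat match goal with
  | H : Z.even ?y = true |- _ =>
      let k := fresh "k" in destruct (Z_even_true_double y H) as [k ?]; clear H
  | H : Z.even ?y = false |- _ =>
      let k := fresh "k" in destruct (Z_even_false_double y H) as [k ?]; clear H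
  end.

Ltac simpl_parity :=
  repeat progress (rewrite ?Z.even_add, ?Z.even_sub, ?Z.even_opp); cbn [Z.even Bool.eqb negb];
  repeat match goal with H : Z.even ?x = ?b |- context [Z.even ?x] => rewrite H end;
  cbn [Bool.eqb negb]; cbv beta iota.

(* Only innermost conditionals are destructed, so that every branch condition
   is a plain comparison that [unbool] and [lia] understand. *)
Ltac destruct_ifs :=
  repeat (simpl_parity;
    match goal with |- context [if ?b then _ else _] =>
      lazymatch b with context [if _ then _ else _] => fail | _ => destruct b eqn:? end
    end; unbool; try (exfalso; lia)).

Section PathDynamics.
Variable M : Z.

Definition path_a (y : Z) : Z :=
  if Z.even y then (if y =? M then y else y + 1) else (if y =? - M then y else y - 1).
Definition path_b (y : Z) : Z :=
  if Z.even y then (if y =? - M then y else y - 1) else (if y =? M then y else y + 1).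

(* Both matchings preserve the difference of a same-parity pair and the sum of
   an opposite-parity pair; the reflections at the ends fold it into 0..M. *)
Definition pair_offset (y1 y2 : Z) : Z :=
  let k := if Bool.eqb (Z.even y1) (Z.even y2) then Z.abs (y2 - y1) else Z.abs (y1 + y2) in
  if k <=? M then k else 2 * M + 1 - k.

Definition pair_lag (y1 y2 : Z) : Z :=
  let sp := Bool.eqb (Z.even y1) (Z.even y2) in
  let lo := Z.min y1 y2 in let hi := Z.max y1 y2 in
  let D := hi - lo in let S := lo + hi in let L := 2*M+1 in
  if hi <=? 0 then
    (if sp then 2*D - lo - 6 + (if D =? 2 then 2 else 0)
     else if - S <=? M then -4*S + lo + 3*M + 4
     else 2*(L+S) + 2*M - 5 + lo + (if L + S =? 2 then 2 else 0))
  else if 1 <=? lo then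
    (if sp then 4*D + lo - 4 + (if D =? 2 then 1 else 0)
     else if S <=? M then 4*S + lo + M - 1
     else 3*(L-S) + 2*M - 3 - hi + (if L - S =? 2 then 1 else 0))
  else
    (if sp then
       (if D <=? M then 4*D + lo + 2*M + 2
        else 3*(L-D) - hi + M - 4 + (if L - D =? 1 then 2 else 0))
     else if S <=? 0 then -4*S + lo + M - 4 + (if -S =? 1 then 2 else 0)
     else 4*S - lo - M - 5 + (if S =? 1 then 2 else 0)).

Lemma path_a_range y : -M <= y <= M -> -M <= path_a y <= M.
Proof. intros. unfold path_a. destruct (Z.even y) eqn:E; split_parity; destruct_ifs; lia. Qed.

Lemma path_b_range y : -M <= y <= M -> -M <= path_b y <= M.
Proof. intros. unfold path_b. destruct (Z.even y) eqn:E; split_parity; destruct_ifs; lia. Qed.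

Lemma path_a_involutive y : -M <= y <= M -> path_a (path_a y) = y.
Proof. intros. unfold path_a. destruct (Z.even y) eqn:E; destruct_ifs; split_parity; lia. Qed.

Lemma path_b_involutive y : -M <= y <= M -> path_b (path_b y) = y.
Proof. intros. unfold path_b. destruct (Z.even y) eqn:E; destruct_ifs; split_parity; lia. Qed.

Lemma path_a_avoids_01 y : -M <= y <= M -> y <> 0 -> y <> 1 -> path_a y <> 0 /\ path_a y <> 1.
Proof. intros. unfold path_a. destruct (Z.even y) eqn:E; destruct_ifs; split_parity; lia. Qed.

Hypothesis M_ge3 : 3 <= M.

Lemma pair_offset_path_b y1 y2 : -M <= y1 <= M -> -M <= y2 <= M -> y1 <> y2 ->
  pair_offset (path_b y1) (path_b y2) = pair_offset y1 y2.
Proof.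
  intros. unfold path_b.
  destruct (Z.even y1) eqn:E1, (Z.even y2) eqn:E2;
  (destruct (y1 =? -M) eqn:?, (y1 =? M) eqn:?, (y2 =? -M) eqn:?, (y2 =? M) eqn:?; unbool;
   unfold pair_offset; cbv zeta; simpl_parity; split_parity; try subst; destruct_ifs; lia).
Qed.

Lemma pair_lag_path_b y1 y2 : -M <= y1 <= M -> -M <= y2 <= M -> y1 <> y2 ->
  pair_lag y1 y2 <= pair_lag (path_b y1) (path_b y2) + 1.
Proof.
  intros. unfold path_b.
  destruct (Z.even y1) eqn:E1, (Z.even y2) eqn:E2;
  (destruct (y1 =? -M) eqn:?, (y1 =? M) eqn:?, (y2 =? -M) eqn:?, (y2 =? M) eqn:?; unbool;
   try (exfalso; lia);
   unfold pair_lag; cbv zeta; simpl_parity; split_parity; try subst; destruct_ifs; lia).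
Qed.

Lemma pair_offset_path_a y1 y2 : -M <= y1 <= M -> -M <= y2 <= M -> y1 <> y2 ->
  y1 <> 0 -> y1 <> 1 -> y2 <> 0 -> y2 <> 1 ->
  pair_offset (path_a y1) (path_a y2) = pair_offset y1 y2.
Proof.
  intros. unfold path_a.
  destruct (Z.even y1) eqn:E1, (Z.even y2) eqn:E2;
  (destruct (y1 =? -M) eqn:?, (y1 =? M) eqn:?, (y2 =? -M) eqn:?, (y2 =? M) eqn:?; unbool;
   try (exfalso; lia);
   unfold pair_offset; cbv zeta; simpl_parity; split_parity; try subst; destruct_ifs; lia).
Qed.

Lemma pair_lag_path_a y1 y2 : -M <= y1 <= M -> -M <= y2 <= M -> y1 <> y2 ->
  y1 <> 0 -> y1 <> 1 -> y2 <> 0 -> y2 <> 1 ->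
  pair_lag y1 y2 <= pair_lag (path_a y1) (path_a y2) + 1.
Proof.
  intros. unfold path_a.
  destruct (Z.even y1) eqn:E1, (Z.even y2) eqn:E2;
  (destruct (y1 =? -M) eqn:?, (y1 =? M) eqn:?, (y2 =? -M) eqn:?, (y2 =? M) eqn:?; unbool;
   try (exfalso; lia);
   unfold pair_lag; cbv zeta; simpl_parity; split_parity; try subst; destruct_ifs; lia).
Qed.

End PathDynamics.

Section Potential.
Variable M : Z.

Definition path_potential (y1 y2 : Z) : Z :=
  Z.min (M * pair_offset M y1 y2 + pair_lag M y1 y2) (M * M).

Definition potential0 (v : Z) : Z :=
  if 2 <=? v then
    (if Z.even v then (if v <=? M then M*v + 4*v + 2*M + 2
                       else M*(2*M+1-v) + 3*(2*M+1-v) - v + M - 4)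
     else M*v + 4*v - M - 5)
  else
    (if Z.even v then M*(-v) - 3*v - 6 + (if v =? -2 then 2 else 0)
     else M*(-v) - 3*v + 3*M + 4).

Definition potential1 (v : Z) : Z :=
  if 2 <=? v then
    (if Z.even v then
       (if v + 1 <=? M then M*(v+1) + 4*(v+1) + M
        else M*(2*M-v) + 3*(2*M-v) + 2*M - 3 - v + (if 2*M-v =? 2 then 1 else 0))
     else M*(v-1) + 4*(v-1) - 3 + (if v =? 3 then 1 else 0))
  else
    (if Z.even v then M*(-(v+1)) - 4*(v+1) + v + M - 4 + (if v =? -2 then 2 else 0)
     else (if 1 - v <=? M then M*(1-v) + 4*(1-v) + v + 2*M + 2
           else M*(2*M+v) + 3*(2*M+v) + M - 5)).

Lemma path_potential_sym y1 y2 : y1 <> y2 -> path_potential y1 y2 = path_potential y2 y1.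
Proof.
  intros. unfold path_potential, pair_offset, pair_lag; cbv zeta.
  rewrite (Z.min_comm y2 y1), (Z.max_comm y2 y1), (Z.add_comm y2 y1).
  destruct (Z.even y1), (Z.even y2); cbn [Bool.eqb]; destruct_ifs; f_equal; lia.
Qed.

Hypothesis M_ge10 : 10 <= M.

Lemma path_potential_0_l v : -M <= v <= M -> v <> 0 -> v <> 1 ->
  path_potential 0 v = Z.min (potential0 v) (M * M).
Proof.
  intros. unfold path_potential, potential0, pair_offset, pair_lag; cbv zeta.
  destruct (Z.even v) eqn:?; destruct_ifs; split_parity; f_equal; lia.
Qed.

Lemma path_potential_1_l v : -M <= v <= M -> v <> 0 -> v <> 1 ->
  path_potential 1 v = Z.min (potential1 v) (M * M).
Proof.
  intros. unfold path_potential, potential1, pair_offset, pair_lag; cbv zeta.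
  destruct (Z.even v) eqn:?; destruct_ifs; split_parity; f_equal; lia.
Qed.

Lemma path_potential_path_b y1 y2 : -M <= y1 <= M -> -M <= y2 <= M -> y1 <> y2 ->
  path_potential y1 y2 <= path_potential (path_b M y1) (path_b M y2) + 1.
Proof.
  intros. unfold path_potential. rewrite pair_offset_path_b by lia.
  pose proof (pair_lag_path_b M ltac:(lia) y1 y2). lia.
Qed.

Lemma path_potential_path_a y1 y2 : -M <= y1 <= M -> -M <= y2 <= M -> y1 <> y2 ->
  y1 <> 0 -> y1 <> 1 -> y2 <> 0 -> y2 <> 1 ->
  path_potential y1 y2 <= path_potential (path_a M y1) (path_a M y2) + 1.
Proof.
  intros. unfold path_potential. rewrite pair_offset_path_a by lia.
  pose proof (pair_lag_path_a M ltac:(lia) y1 y2). lia.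
Qed.

Lemma path_potential_0_1 : path_potential 0 1 = 1.
Proof. unfold path_potential, pair_offset, pair_lag; cbv zeta. destruct_ifs; lia. Qed.

Lemma path_potential_0_M : path_potential 0 M = M * M.
Proof.
  rewrite path_potential_0_l by lia. unfold potential0.
  destruct (Z.even M); destruct_ifs; lia.
Qed.

(* Only within 4 of an end of the path do path_a and path_b reflect
   instead of shifting by one. *)
Ltac split_near_ends M y :=
  assert (HS : y = M \/ y = M-1 \/ y = M-2 \/ y = M-3 \/ y = M-4 \/
               y = -M \/ y = -M+1 \/ y = -M+2 \/ y = -M+3 \/ y = -M+4 \/
     (-M+4 < y < M-4)) by lia;
  destruct HS as [->|[->|[->|[->|[->|[->|[->|[->|[->|[->|HS]]]]]]]]]];
  [destruct (Z.even M) eqn:?..|destruct (Z.even y) eqn:?].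

Lemma path_potential_switch_end e y : e = 0 \/ e = 1 -> -M <= y <= M -> y <> 0 -> y <> 1 ->
  path_potential (1 - e) y <= path_potential e y + 2.
Proof.
  intros He Hy Hy0 Hy1.
  destruct He as [-> | ->]; rewrite ?Z.sub_0_r, ?Z.sub_diag;
    rewrite path_potential_0_l, path_potential_1_l by lia; unfold potential0, potential1;
    split_near_ends M y; destruct_ifs; split_parity; lia.
Qed.

Lemma path_potential_switch_end_aba e y : e = 0 \/ e = 1 -> -M <= y <= M -> y <> 0 -> y <> 1 ->
  path_b M (path_a M y) <> 0 -> path_b M (path_a M y) <> 1 ->
  path_potential (1 - e) y <= path_potential e (path_a M (path_b M (path_a M y))) + 3.
Proof.
  intros He Hy Hy0 Hy1 Hw0 Hw1.
  pose proof (path_a_range M y Hy) as Ha.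
  pose proof (path_b_range M (path_a M y) Ha) as Hba.
  pose proof (path_a_range M (path_b M (path_a M y)) Hba) as Haba.
  destruct (path_a_avoids_01 M (path_b M (path_a M y)) Hba Hw0 Hw1) as [Haba0 Haba1].
  destruct He as [-> | ->]; rewrite ?Z.sub_0_r, ?Z.sub_diag;
    rewrite path_potential_0_l, path_potential_1_l by lia;
    revert Hw0 Hw1 Ha Hba Haba Haba0 Haba1;
    unfold potential0, potential1, path_a, path_b;
    split_near_ends M y; destruct_ifs; intros; split_parity; lia.
Qed.

End Potential.

Section ParkedPotential.
Variable M : Z.

Definition gadget_potential (e y : Z) : Z :=
  if e =? 0 then (if y =? 1 then 2*M+4 else 2*M+3) else (if y =? 1 then 2*M+5 else 2*M+2).

(* A token parked at q_2 (e = 0) or q_4 (e = 1) re-enters the path at e with the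
   next a; minimise over the two words, a and ba, that can precede it. *)
Definition parked_potential (e y : Z) : Z :=
  if (y =? 0) || (y =? 1) then gadget_potential e y else
  let w := path_b M y in
  Z.min (path_potential M e (path_a M y) + 1)
        (if (w =? 0) || (w =? 1) then gadget_potential e w + 1
         else path_potential M e (path_a M w) + 2).

Hypothesis M_ge10 : 10 <= M.

Lemma path_potential_ba_gadget e y : e = 0 \/ e = 1 -> -M <= y <= M -> y <> 0 -> y <> 1 ->
  path_b M (path_a M y) = 0 \/ path_b M (path_a M y) = 1 ->
  path_potential M (1 - e) y <= gadget_potential e (path_b M (path_a M y)) + 2.
Proof.
  intros He Hy Hy0 Hy1 Hw.
  assert (y = -2 \/ y = 3) as [-> | ->].
  { revert Hw. unfold path_a, path_b. destruct (Z.even y) eqn:?; destruct_ifs; split_parity; lia. }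
  all: destruct He as [-> | ->]; rewrite ?Z.sub_0_r, ?Z.sub_diag;
    rewrite ?path_potential_0_l, ?path_potential_1_l by lia;
    unfold potential0, potential1, gadget_potential, path_a, path_b; destruct_ifs; lia.
Qed.

Lemma parked_potential_off_gadget e y : y <> 0 -> y <> 1 ->
  parked_potential e y =
  (let w := path_b M y in
   Z.min (path_potential M e (path_a M y) + 1)
         (if (w =? 0) || (w =? 1) then gadget_potential e w + 1
          else path_potential M e (path_a M w) + 2)).
Proof.
  intros Hy0 Hy1. unfold parked_potential.
  now rewrite (proj2 (Z.eqb_neq _ _) Hy0), (proj2 (Z.eqb_neq _ _) Hy1).
Qed.

Lemma parked_potential_le e y : -M <= y <= M -> y <> 0 -> y <> 1 ->
  parked_potential e y <= path_potential M e (path_a M y) + 1.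
Proof. intros. rewrite parked_potential_off_gadget by lia. cbv zeta. lia. Qed.

Lemma parked_potential_path_a e y : e = 0 \/ e = 1 -> -M <= y <= M -> y <> 0 -> y <> 1 ->
  path_potential M (1 - e) y <= parked_potential e (path_a M y) + 1.
Proof.
  intros He Hy Hy0 Hy1.
  destruct (path_a_avoids_01 M y Hy Hy0 Hy1) as [Ha0 Ha1].
  rewrite parked_potential_off_gadget by lia. cbv zeta.
  rewrite path_a_involutive by lia.
  pose proof (path_potential_switch_end M M_ge10 e y He Hy Hy0 Hy1).
  destruct (Z.eqb_spec (path_b M (path_a M y)) 0) as [Hw0|Hw0],
    (Z.eqb_spec (path_b M (path_a M y)) 1) as [Hw1|Hw1]; cbn [orb].
  - lia.
  - pose proof (path_potential_ba_gadget e y He Hy Hy0 Hy1 (or_introl Hw0)).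
    rewrite Hw0 in *. destruct He as [-> | ->]; cbn in *; lia.
  - pose proof (path_potential_ba_gadget e y He Hy Hy0 Hy1 (or_intror Hw1)).
    rewrite Hw1 in *. destruct He as [-> | ->]; cbn in *; lia.
  - pose proof (path_potential_switch_end_aba M M_ge10 e y He Hy Hy0 Hy1 Hw0 Hw1). lia.
Qed.

Lemma parked_potential_path_b e y : e = 0 \/ e = 1 -> -M <= y <= M ->
  parked_potential e y <= parked_potential e (path_b M y) + 1.
Proof.
  intros He Hy. pose proof (path_b_involutive M y Hy) as Hbb.
  destruct (Z.eq_dec y 0) as [->|Hy0]; [|destruct (Z.eq_dec y 1) as [->|Hy1]].
  1,2: assert (10 * M <= M * M) by nia;
    destruct He as [-> | ->]; unfold parked_potential, gadget_potential, path_a, path_b;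
    destruct_ifs; rewrite ?path_potential_0_l, ?path_potential_1_l by lia;
    unfold potential0, potential1; destruct_ifs; lia.
  rewrite (parked_potential_off_gadget e y) by lia. cbv zeta.
  destruct ((path_b M y =? 0) || (path_b M y =? 1)) eqn:Hw.
  - unfold parked_potential; rewrite Hw. lia.
  - unfold parked_potential; rewrite Hw. cbv zeta. rewrite Hbb.
    destruct (Z.eqb_spec y 0), (Z.eqb_spec y 1); try lia. cbn [orb]. lia.
Qed.

End ParkedPotential.

Inductive token := OnPath (y : Z) | AtQ2 | AtQ4.

Section Tokens.
Variable M : Z.

Definition token_a (t : token) : token :=
  match t with
  | OnPath y => if y =? 0 then AtQ4 else if y =? 1 then AtQ2 else OnPath (path_a M y)
  | AtQ2 => OnPath 0
  | AtQ4 => OnPath 1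
  end.

Definition token_b (t : token) : token :=
  match t with OnPath y => OnPath (path_b M y) | t => t end.

Definition token_act (c : bool) : token -> token := if c then token_a else token_b.

Definition token_valid (t : token) : Prop :=
  match t with OnPath y => -M <= y <= M | _ => True end.

Definition potential (t1 t2 : token) : Z :=
  match t1, t2 with
  | OnPath y1, OnPath y2 => path_potential M y1 y2
  | AtQ2, OnPath y | OnPath y, AtQ2 => parked_potential M 0 y
  | AtQ4, OnPath y | OnPath y, AtQ4 => parked_potential M 1 y
  | _, _ => 2
  end.

Lemma token_act_injective c t1 t2 : token_valid t1 -> token_valid t2 ->
  token_act c t1 = token_act c t2 -> t1 = t2.
Proof.
  intros V1 V2 E. destruct c, t1 as [y1| |], t2 as [y2| |]; cbn in *; try easy.
  6: { injection E as E. f_equal.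
       now rewrite <- (path_b_involutive M y1), <- (path_b_involutive M y2), E. }
  { destruct (Z.eqb_spec y1 0), (Z.eqb_spec y1 1), (Z.eqb_spec y2 0), (Z.eqb_spec y2 1);
      try discriminate; try (f_equal; lia); injection E as E.
    f_equal. now rewrite <- (path_a_involutive M y1), <- (path_a_involutive M y2), E. }
  all: match type of E with context [if (?y =? 0) then _ else _] =>
    destruct (Z.eqb_spec y 0), (Z.eqb_spec y 1); try discriminate; injection E as E;
    destruct (path_a_avoids_01 M y); auto; lia end.
Qed.

Hypothesis M_ge10 : 10 <= M.

Lemma token_act_valid c t : token_valid t -> token_valid (token_act c t).
Proof.
  destruct c, t as [y| |]; cbn; intros; try lia.
  - destruct (y =? 0), (y =? 1); cbn; auto. now apply path_a_range.
  - now apply path_b_range.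
Qed.

Lemma potential_sym t1 t2 : t1 <> t2 -> potential t1 t2 = potential t2 t1.
Proof.
  intros. destruct t1, t2; cbn; try reflexivity.
  apply path_potential_sym. congruence.
Qed.

Lemma potential_step_b t1 t2 : token_valid t1 -> token_valid t2 -> t1 <> t2 ->
  potential t1 t2 <= potential (token_b t1) (token_b t2) + 1.
Proof.
  intros V1 V2 D. destruct t1 as [y1| |], t2 as [y2| |]; cbn in *; try lia.
  1: apply path_potential_path_b; auto; congruence.
  all: apply parked_potential_path_b; lia.
Qed.

Lemma potential_step_a_path y1 y2 : -M <= y1 <= M -> -M <= y2 <= M -> y1 <> y2 ->
  potential (OnPath y1) (OnPath y2) <= potential (token_a (OnPath y1)) (token_a (OnPath y2)) + 1.
Proof.
  intros V1 V2 D. cbn [token_a potential].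
  pose proof (parked_potential_path_a M M_ge10 0) as Exit0.
  pose proof (parked_potential_path_a M M_ge10 1) as Exit1.
  rewrite Z.sub_0_r in Exit0. rewrite Z.sub_diag in Exit1.
  destruct (Z.eqb_spec y1 0), (Z.eqb_spec y1 1), (Z.eqb_spec y2 0), (Z.eqb_spec y2 1);
    subst; cbn [potential]; try lia.
  - rewrite path_potential_0_1 by lia. lia.
  - apply Exit1; lia.
  - rewrite path_potential_sym, path_potential_0_1 by lia. lia.
  - apply Exit0; lia.
  - rewrite path_potential_sym by lia. apply Exit1; lia.
  - rewrite path_potential_sym by lia. apply Exit0; lia.
  - apply path_potential_path_a; lia.
Qed.

Lemma potential_step_a_parked y : -M <= y <= M ->
  potential (OnPath y) AtQ2 <= potential (token_a (OnPath y)) (token_a AtQ2) + 1 /\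
  potential (OnPath y) AtQ4 <= potential (token_a (OnPath y)) (token_a AtQ4) + 1.
Proof.
  intros V. cbn [token_a potential].
  destruct (Z.eqb_spec y 0), (Z.eqb_spec y 1); subst; cbn [potential].
  1-3: unfold parked_potential, gadget_potential; destruct_ifs; lia.
  rewrite !(path_potential_sym _ (path_a M y)) by (destruct (path_a_avoids_01 M y); lia).
  split; apply parked_potential_le; lia.
Qed.

Lemma potential_step c t1 t2 : token_valid t1 -> token_valid t2 -> t1 <> t2 ->
  potential t1 t2 <= potential (token_act c t1) (token_act c t2) + 1.
Proof.
  intros V1 V2 D. destruct c; cbn [token_act]; [|now apply potential_step_b].
  assert (Da : token_a t1 <> token_a t2)
    by (intros E; apply D; now apply (token_act_injective true)).
  destruct t1 as [y1| |], t2 as [y2| |]; cbn [token_valid] in *; try congruence.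
  - apply potential_step_a_path; auto; congruence.
  - now apply potential_step_a_parked.
  - now apply potential_step_a_parked.
  - rewrite (potential_sym _ _ D), (potential_sym _ _ Da). now apply potential_step_a_parked.
  - cbn. rewrite path_potential_0_1 by lia. lia.
  - rewrite (potential_sym _ _ D), (potential_sym _ _ Da). now apply potential_step_a_parked.
  - cbn. rewrite path_potential_sym, path_potential_0_1 by lia. lia.
Qed.

End Tokens.

Local Close Scope Z_scope.

Lemma half_sub3 m : (2 * m + 3 - 3) / 2 = m.
Proof. replace (2 * m + 3 - 3) with (m * 2) by lia. apply Nat.div_mul. lia. Qed.

Ltac eval_existsb i0 :=
  rewrite (existsb_seq_at _ _ _ i0)
    by (intros ?i [_ ?Hi]%andb_true_iff; apply Nat.eqb_eq in Hi; lia).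

Lemma chain_swap_odd m seli selj k : 1 <= k <= m + 1 ->
  chain_swap (2*m+3) seli selj (2*k+1) =
  if (k <=? m) && seli k then 2*k+1+2 else if (2 <=? k) && seli (k-1) then 2*k+1-2 else 2*k+1.
Proof.
  intros Hk. unfold chain_swap, i_range, j_range. rewrite half_sub3.
  eval_existsb k. eval_existsb (k-1). eval_existsb 0. eval_existsb 0.
  rewrite Nat.eqb_refl.
  replace (2 * k + 1 =? 2 * (k - 1) + 3) with true by (symmetry; apply Nat.eqb_eq; lia).
  replace (1 <=? k) with true by (symmetry; apply Nat.leb_le; lia).
  replace (k <? 1 + m) with (k <=? m)
    by (destruct (Nat.ltb_spec k (1 + m)), (Nat.leb_spec k m); lia).
  replace (1 <=? k - 1) with (2 <=? k)
    by (destruct (Nat.leb_spec 1 (k - 1)), (Nat.leb_spec 2 k); lia).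
  replace (k - 1 <? 1 + m) with true by (symmetry; apply Nat.ltb_lt; lia).
  destruct (k <=? m), (seli k), (2 <=? k), (seli (k-1)); reflexivity.
Qed.

Lemma chain_swap_even m seli selj j : 2 <= m -> 1 <= j <= m + 1 ->
  chain_swap (2*m+3) seli selj (2*j) =
  if (3 <=? j) && (j <=? m) && selj j then 2*j+2 else if (4 <=? j) && selj (j-1) then 2*j-2 else 2*j.
Proof.
  intros Hm Hj. unfold chain_swap, i_range, j_range. rewrite half_sub3.
  eval_existsb 0. eval_existsb 0. eval_existsb j. eval_existsb (j-1).
  rewrite Nat.eqb_refl. cbn [andb].
  replace (j <? 3 + (m - 2)) with (j <=? m)
    by (destruct (Nat.ltb_spec j (3 + (m - 2))), (Nat.leb_spec j m); lia).
  replace (3 <=? j - 1) with (4 <=? j)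
    by (destruct (Nat.leb_spec 3 (j - 1)), (Nat.leb_spec 4 j); lia).
  replace (j - 1 <? 3 + (m - 2)) with true by (symmetry; apply Nat.ltb_lt; lia).
  replace (2 * j =? 2 * (j - 1) + 2) with true by (symmetry; apply Nat.eqb_eq; lia).
  destruct (3 <=? j), (j <=? m), (selj j), (4 <=? j), (selj (j-1)); reflexivity.
Qed.

(* q_{2k+1} sits at 1 - k and q_{2j} (j >= 3) at j - 1. *)
Definition token_of_state (q : nat) : token :=
  if q =? 2 then AtQ2 else if q =? 4 then AtQ4 else
  if Nat.odd q then OnPath (1 - Z.of_nat (Nat.div2 q)) else OnPath (Z.of_nat (Nat.div2 q) - 1).

Lemma token_of_state_odd q k : q = 2*k+1 -> token_of_state q = OnPath (1 - Z.of_nat k).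
Proof.
  intros ->. unfold token_of_state.
  rewrite (proj2 (Nat.eqb_neq _ 2)), (proj2 (Nat.eqb_neq _ 4)) by lia.
  rewrite <- Nat.negb_even, Nat.even_odd, Nat.add_1_r, Nat.div2_succ_double. reflexivity.
Qed.

Lemma token_of_state_even q j : 3 <= j -> q = 2*j -> token_of_state q = OnPath (Z.of_nat j - 1).
Proof.
  intros ? ->. unfold token_of_state.
  rewrite (proj2 (Nat.eqb_neq _ 2)), (proj2 (Nat.eqb_neq _ 4)) by lia.
  rewrite <- Nat.negb_even, Nat.even_even, Nat.div2_double. reflexivity.
Qed.

Lemma Z_even_of_nat k : Z.even (Z.of_nat k) = Nat.even k.
Proof.
  destruct (Nat.Even_or_Odd k) as [[p ->]|[p ->]].
  - rewrite Nat.even_even, Nat2Z.inj_mul. apply Z.even_even.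
  - rewrite Nat.even_odd, Nat2Z.inj_add, Nat2Z.inj_mul. apply Z.even_odd.
Qed.

Ltac solve_path_step :=
  rewrite ?Z.even_sub, ?Z.even_add, ?Z_even_of_nat, ?Nat.even_even, ?Nat.even_odd;
  cbn [Z.even Bool.eqb negb];
  repeat match goal with |- context [(?a =? ?b)%Z] => destruct (Z.eqb_spec a b); try lia end;
  try (f_equal; lia).

Lemma even_double_sub1 p : 1 <= p -> Nat.even (2*p-1) = false.
Proof. intros. replace (2*p-1) with (2*(p-1)+1) by lia. apply Nat.even_odd. Qed.

Section LetterActions.
Variable m : nat.
Hypothesis m_ge10 : 10 <= m.

Lemma a_act_odd_state k : 2 <= k <= m+1 ->
  token_of_state (a_act (2*m+3) (2*k+1)) = token_a (Z.of_nat m) (OnPath (1 - Z.of_nat k)) /\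
  1 <= a_act (2*m+3) (2*k+1) <= 2*m+3.
Proof.
  intros Hk. unfold a_act.
  do 4 (rewrite (proj2 (Nat.eqb_neq _ _)) by lia).
  rewrite chain_swap_odd by lia.
  replace (2 <=? k) with true by (symmetry; apply Nat.leb_le; lia). cbn [andb].
  unfold token_a. do 2 (rewrite (proj2 (Z.eqb_neq _ _)) by lia). unfold path_a.
  destruct (Nat.Even_or_Odd k) as [[p ->]|[p ->]].
  - rewrite Nat.even_even. destruct (Nat.leb_spec (2*p) m); cbn [andb].
    + split; [|lia]. rewrite (token_of_state_odd _ (2*p+1)) by lia. solve_path_step.
    + rewrite even_double_sub1 by lia.
      split; [|lia]. rewrite (token_of_state_odd _ (2*p)) by lia. solve_path_step.
  - rewrite Nat.even_odd, andb_false_r. replace (2*p+1-1) with (2*p) by lia. rewrite Nat.even_even.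
    split; [|lia]. rewrite (token_of_state_odd _ (2*p)) by lia. solve_path_step.
Qed.

Lemma b_act_odd_state k : 1 <= k <= m+1 ->
  token_of_state (b_act (2*m+3) (2*k+1)) = token_b (Z.of_nat m) (OnPath (1 - Z.of_nat k)) /\
  1 <= b_act (2*m+3) (2*k+1) <= 2*m+3.
Proof.
  intros Hk. unfold b_act.
  do 2 (rewrite (proj2 (Nat.eqb_neq _ _)) by lia).
  rewrite chain_swap_odd by lia. rewrite <- !Nat.negb_even.
  unfold token_b, path_b.
  destruct (Nat.Even_or_Odd k) as [[p ->]|[p ->]].
  - rewrite Nat.even_even, andb_false_r, even_double_sub1 by lia. cbn [negb]. rewrite andb_true_r.
    destruct (Nat.leb_spec 2 (2*p)); [|lia].
    split; [|lia]. rewrite (token_of_state_odd _ (2*p-1)) by lia. solve_path_step.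
  - rewrite Nat.even_odd. cbn [negb]. rewrite andb_true_r.
    destruct (Nat.leb_spec (2*p+1) m).
    + split; [|lia]. rewrite (token_of_state_odd _ (2*p+2)) by lia. solve_path_step.
    + replace (2*p+1-1) with (2*p) by lia. rewrite Nat.even_even. cbn [negb]. rewrite andb_false_r.
      split; [|lia]. rewrite (token_of_state_odd _ (2*p+1)) by lia. solve_path_step.
Qed.

Lemma a_act_even_state j : 3 <= j <= m+1 ->
  token_of_state (a_act (2*m+3) (2*j)) = token_a (Z.of_nat m) (OnPath (Z.of_nat j - 1)) /\
  1 <= a_act (2*m+3) (2*j) <= 2*m+3.
Proof.
  intros Hj. unfold a_act.
  do 4 (rewrite (proj2 (Nat.eqb_neq _ _)) by lia).
  rewrite chain_swap_even by lia. rewrite <- !Nat.negb_even.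
  unfold token_a. do 2 (rewrite (proj2 (Z.eqb_neq _ _)) by lia). unfold path_a.
  replace (3 <=? j) with true by (symmetry; apply Nat.leb_le; lia). cbn [andb].
  destruct (Nat.Even_or_Odd j) as [[p ->]|[p ->]].
  - rewrite Nat.even_even, andb_false_r, even_double_sub1 by lia. cbn [negb]. rewrite andb_true_r.
    replace (4 <=? 2*p) with true by (symmetry; apply Nat.leb_le; lia).
    split; [|lia]. rewrite (token_of_state_even _ (2*p-1)) by lia. solve_path_step.
  - rewrite Nat.even_odd. cbn [negb]. rewrite andb_true_r.
    destruct (Nat.leb_spec (2*p+1) m).
    + split; [|lia]. rewrite (token_of_state_even _ (2*p+2)) by lia. solve_path_step.
    + replace (2*p+1-1) with (2*p) by lia. rewrite Nat.even_even. cbn [negb]. rewrite andb_false_r.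
      split; [|lia]. rewrite (token_of_state_even _ (2*p+1)) by lia. solve_path_step.
Qed.

Lemma b_act_even_state j : 4 <= j <= m+1 ->
  token_of_state (b_act (2*m+3) (2*j)) = token_b (Z.of_nat m) (OnPath (Z.of_nat j - 1)) /\
  1 <= b_act (2*m+3) (2*j) <= 2*m+3.
Proof.
  intros Hj. unfold b_act.
  do 2 (rewrite (proj2 (Nat.eqb_neq _ _)) by lia).
  rewrite chain_swap_even by lia.
  unfold token_b, path_b.
  replace (3 <=? j) with true by (symmetry; apply Nat.leb_le; lia).
  replace (4 <=? j) with true by (symmetry; apply Nat.leb_le; lia). cbn [andb].
  destruct (Nat.Even_or_Odd j) as [[p ->]|[p ->]].
  - rewrite Nat.even_even, andb_true_r.
    destruct (Nat.leb_spec (2*p) m).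
    + split; [|lia]. rewrite (token_of_state_even _ (2*p+1)) by lia. solve_path_step.
    + rewrite even_double_sub1 by lia.
      split; [|lia]. rewrite (token_of_state_even _ (2*p)) by lia. solve_path_step.
  - rewrite Nat.even_odd, andb_false_r.
    replace (2*p+1-1) with (2*p) by lia. rewrite Nat.even_even.
    split; [|lia]. rewrite (token_of_state_even _ (2*p)) by lia. solve_path_step.
Qed.

Lemma chain_swap_fixes_q2_q4 s t : chain_swap (2*m+3) s t 2 = 2 /\ chain_swap (2*m+3) s t 4 = 4.
Proof.
  pose proof (chain_swap_even m s t 1 ltac:(lia) ltac:(lia)) as E2.
  pose proof (chain_swap_even m s t 2 ltac:(lia) ltac:(lia)) as E4.
  change (2 * 1) with 2 in E2. change (2 * 2) with 4 in E4.
  now rewrite E2, E4.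
Qed.

Lemma token_of_letter_act c q : 1 <= q <= 2*m+3 ->
  token_of_state (letter_act (2*m+3) c q) = token_act (Z.of_nat m) c (token_of_state q) /\
  1 <= letter_act (2*m+3) c q <= 2*m+3.
Proof.
  intros Hq. destruct (chain_swap_fixes_q2_q4 Nat.odd Nat.even) as [Hb2 Hb4].
  unfold letter_act, token_act.
  destruct (Nat.Even_or_Odd q) as [[j ->]|[k ->]].
  - destruct (Nat.eq_dec j 1) as [->|?]; [|destruct (Nat.eq_dec j 2) as [->|?]];
      [| |destruct (Nat.eq_dec j 3) as [->|?]].
    + change (2 * 1) with 2. unfold a_act, b_act.
      destruct c; cbn [Nat.eqb]; rewrite ?Hb2; split; reflexivity || lia.
    + change (2 * 2) with 4. unfold a_act, b_act.
      destruct c; cbn [Nat.eqb]; rewrite ?Hb4; split; reflexivity || lia.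
    + rewrite (token_of_state_even (2*3) 3) by lia. destruct c.
      * apply a_act_even_state; lia.
      * change (2 * 3) with 6. unfold b_act. cbn [Nat.eqb].
        rewrite (token_of_state_odd 1 0) by lia. split; [|lia]. unfold token_b, path_b. solve_path_step.
    + rewrite (token_of_state_even (2*j) j) by lia.
      destruct c; [apply a_act_even_state | apply b_act_even_state]; lia.
  - rewrite (token_of_state_odd (2*k+1) k) by lia.
    destruct (Nat.eq_dec k 0) as [->|?]; [|destruct (Nat.eq_dec k 1) as [->|?]].
    + change (2 * 0 + 1) with 1. unfold a_act, b_act. destruct c; cbn [Nat.eqb].
      * split; [reflexivity | lia].
      * rewrite (token_of_state_even 6 3) by lia. split; [|lia]. unfold token_b, path_b. solve_path_step.
    + destruct c; [|apply b_act_odd_state; lia].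
      change (2 * 1 + 1) with 3. unfold a_act. cbn [Nat.eqb]. split; [reflexivity | lia].
    + destruct c; [apply a_act_odd_state | apply b_act_odd_state]; lia.
Qed.

End LetterActions.

Lemma token_of_word_act m w q : 10 <= m -> 1 <= q <= 2*m+3 ->
  token_of_state (word_act (2*m+3) w q) = act_word (token_act (Z.of_nat m)) w (token_of_state q).
Proof.
  intros Hm Hq.
  refine (proj2 (fold_left_semiconj _ _ token_of_state (fun q => 1 <= q <= 2*m+3) _ w q Hq)).
  intros q' c Hq'. destruct (token_of_letter_act m Hm c q' Hq'). auto.
Qed.

Lemma walk_length_lower_bound m w : 10 <= m ->
  walk_ends_at (2*m+3) w (3, 2*m+2) (2, 4) -> m * m <= length w + 2.
Proof.
  intros Hm Hw. assert (HM : (10 <= Z.of_nat m)%Z) by lia.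
  pose proof (potential_word_bound (token_act (Z.of_nat m)) (token_valid (Z.of_nat m))
    (potential (Z.of_nat m)) (token_act_valid _ HM) (token_act_injective _)
    (potential_step _ HM) w (OnPath 0) (OnPath (Z.of_nat m))
    ltac:(cbn; lia) ltac:(cbn; lia) ltac:(injection; lia)) as Bound.
  cbn [potential] in Bound. rewrite path_potential_0_M in Bound by lia.
  assert (T3 : token_of_state 3 = OnPath 0) by (now rewrite (token_of_state_odd 3 1)).
  assert (Tm : token_of_state (2*m+2) = OnPath (Z.of_nat m))
    by (rewrite (token_of_state_even _ (m+1)) by lia; f_equal; lia).
  rewrite <- T3, <- Tm, <- !token_of_word_act in Bound by lia.
  destruct Hw as [[H1 H2]|[H1 H2]]; cbn [fst snd] in H1, H2; rewrite H1, H2 in Bound;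
    cbn [token_of_state Nat.eqb potential] in Bound; lia.
Qed.

(* The constant 100 makes the bound nonpositive, hence vacuous, for m < 10. *)
Lemma pair_diam_ge_odd m : 2 <= m ->
  pair_diam_ge (2*m+3) (INR (2*m+3) ^ 2 / 4 + (-(3/2) * INR (2*m+3) - 100))%R.
Proof.
  intros Hm2. exists (3, 2*m+2), (2, 4).
  split; [unfold pair_vertex; cbn; lia|]. split; [unfold pair_vertex; cbn; lia|].
  intros w Hw.
  rewrite plus_INR, mult_INR.
  replace (INR 2) with 2%R by (simpl; lra). replace (INR 3) with 3%R by (simpl; lra).
  destruct (Nat.le_gt_cases 10 m) as [Hm|Hm].
  - apply walk_length_lower_bound, le_INR in Hw; auto.
    rewrite plus_INR, mult_INR in Hw. replace (INR 2) with 2%R in Hw by (simpl; lra). nra.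
  - assert (INR m <= 9)%R by (replace 9%R with (INR 9) by (simpl; lra); apply le_INR; lia).
    pose proof (pos_INR m). pose proof (pos_INR (length w)). nra.
Qed.

Theorem theorem5 :
  exists g : nat -> R,
    Un_cv (fun n => (g n / (INR n ^ 2))%R) 0%R /\
    forall n : nat, 7 <= n -> Nat.odd n = true ->
      pair_diam_ge n (INR n ^ 2 / 4 + g n)%R.
Proof.
  exists (fun n => -(3/2) * INR n - 100)%R.
  split; [apply Un_cv_affine_over_square|].
  intros n Hn Hodd.
  apply Nat.odd_spec in Hodd as [k ->].
  replace (2 * k + 1) with (2 * (k - 1) + 3) by lia.
  apply pair_diam_ge_odd. lia.
Qed.
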